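(* Let $c_{n,k}$ be the number of matchings of size $n$ with exactly $k$ occurrences of the endhered pattern $321$, and $a_{n,0}$ the number of matchings of size $n$ with no occurrence of the endhered pattern $21$. For any $n>0$, $$c_{n,0}=\sum_{s=0}^{\lfloor n/2\rfloor}\binom{n-s}{s}a_{n-s,0},$$ and for any $k>0$, $$c_{n,k}=\sum_{s=1}^{\lfloor (n-k)/2\rfloor}\binom{k+s-1}{k}\binom{n-k-s}{s}a_{n-k-s,0}.$$
   Context: A matching of size $n$ is a set of $n$ arcs $(a,b)$ with $1\le a<b\le 2n$ such that each point of $\{1,\dots,2n\}$ belongs to exactly one arc (the empty matching has size $0$). An occurrence of the endhered pattern $21$ in a matching is a pair of arcs of the form $(i+1,j+2),(i+2,j+1)$; an occurrence of the endhered pattern $321$ is a triple of arcs of the form $(i+1,j+3),(i+2,j+2),(i+3,j+1)$ (three mutually nested arcs with consecutive starting points and consecutive ending points). The number of occurrences is the number of such pairs (resp. triples). *)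

From mathcomp Require Import all_boot.
Set Implicit Arguments. Unset Strict Implicit. Unset Printing Implicit Defensive.

(* Points {1,...,2n} are represented (shifted by one) as 'I_(2n) = {0,...,2n-1};
   an arc (a,b) is a pair of points, and a matching is a set of arcs. *)
Definition arc (n : nat) := ('I_(n.*2) * 'I_(n.*2))%type.

Definition is_matching (n : nat) (M : {set arc n}) : bool :=
  [forall p in M, (p.1 < p.2)%N] &&
  [forall x : 'I_(n.*2), #|[set p in M | (p.1 == x) || (p.2 == x)]| == 1%N].

Definition occ21 (n : nat) (M : {set arc n}) : nat :=
  #|[set pq : arc n * arc n | [&& pq.1 \in M, pq.2 \in M,
        (pq.2.1 : nat) == (pq.1.1 : nat).+1 &
        (pq.1.2 : nat) == (pq.2.2 : nat).+1]]|.

Definition occ321 (n : nat) (M : {set arc n}) : nat :=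
  #|[set t : arc n * arc n * arc n | [&& t.1.1 \in M, t.1.2 \in M, t.2 \in M,
        (t.1.2.1 : nat) == (t.1.1.1 : nat).+1,
        (t.2.1 : nat) == (t.1.2.1 : nat).+1,
        (t.1.1.2 : nat) == (t.1.2.2 : nat).+1 &
        (t.1.2.2 : nat) == (t.2.2 : nat).+1]]|.

Definition c_nk (n k : nat) : nat :=
  #|[set M : {set arc n} | is_matching M && (occ321 M == k)]|.

Definition a_n0 (n : nat) : nat :=
  #|[set M : {set arc n} | is_matching M && (occ21 M == 0%N)]|.

From Pilot Require Import Defs.
From mathcomp Require Import all_boot zify.
Set Implicit Arguments. Unset Strict Implicit. Unset Printing Implicit Defensive.

(* Let d(n,s,k) be the number of matchings of size n with s+k occurrences of 21
   and k of 321, so that c(n,k) = sum_s d(n,s,k) and d(n,0,0) = a(n,0).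
   Doubling an arc (a,b) into the nested pair (a,b+2),(a+1,b+1) is a bijection
   from matchings with a marked arc onto matchings with a marked arc that has a
   parent (the marked arc going to the inner copy).  It always creates exactly
   one 21, and it creates one 321 iff the arc has a parent, or has a child but
   no parent.  Marking arcs with a parent, resp. a grandparent, gives
     (k+1) d(n+1,s,k+1) = (s+k) d(n,s,k);
   in a 321-free matching with s occurrences of 21, exactly n-2s arcs have
   neither parent nor child, and marking those gives
     (s+1) d(n+1,s+1,0) = (n-2s) d(n,s,0).
   These recurrences solve to d(n,s,k) = C(k+s-1,k) C(n-k-s,s) a(n-k-s,0). *)

(* [path] exports another [arc]. *)
Local Notation arc := Defs.arc.

Lemma card_sum (T : finType) (A : {set T}) (P : pred T) :
  #|[set x in A | P x]| = \sum_(x in A) P x.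
Proof.
rewrite -sum1dep_card big_mkcondr; apply: eq_bigr => x _.
by case: (P x).
Qed.

Lemma sum_eq1 (T : finType) (x : T) : \sum_(z : T) (x == z) = 1.
Proof. by rewrite (bigD1 x) //= eqxx big1 // => z; rewrite eq_sym => /negbTE->. Qed.

Lemma card_pairs_const (T1 T2 : finType) (S : {set T1}) (F : T1 -> {set T2}) c :
  (forall x, x \in S -> #|F x| = c) ->
  #|[set X : T1 * T2 | (X.1 \in S) && (X.2 \in F X.1)]| = c * #|S|.
Proof.
move=> Fc; rewrite -sum1dep_card -(pair_big_dep _ (fun x y => y \in F x) (fun _ _ => 1)).
rewrite -sum1_card big_distrr /=; apply: eq_bigr => x /Fc <-.
by rewrite muln1 sum1_card.
Qed.

Lemma card_partition_nat (T : finType) (A : {set T}) (f : T -> nat) N :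
  (forall x, x \in A -> f x < N) ->
  #|A| = \sum_(s < N) #|[set x in A | f x == s]|.
Proof.
move=> f_lt; under eq_bigr => s _ do rewrite card_sum.
rewrite exchange_big /= -sum1_card; apply: eq_bigr => x xA.
rewrite (bigD1 (Ordinal (f_lt x xA))) //= eqxx big1 // => s ne.
case: (eqVneq (f x) s) => // fx.
by case/negP: ne; apply/eqP/val_inj.
Qed.

Lemma sum_nat_trunc (F : nat -> nat) l m N : l <= m <= N ->
  (forall s, m <= s < N -> F s = 0) -> \sum_(l <= s < N) F s = \sum_(l <= s < m) F s.
Proof.
case/andP => l_le m_le F0; rewrite (big_cat_nat l_le m_le) /=.
by rewrite [X in _ + X]big_nat_cond [X in _ + X]big1 ?addn0 // => s /andP[/F0].
Qed.

(** * Matchings as relations on points *)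

Definition has_arc n (M : {set arc n}) (x y : nat) : bool :=
  [exists p in M, (p.1 == x :> nat) && (p.2 == y :> nat)].

Lemma arc_ext n (p q : arc n) : p.1 = q.1 :> nat -> p.2 = q.2 :> nat -> p = q.
Proof. by case: p q => [p1 p2] [q1 q2] /= /val_inj-> /val_inj->. Qed.

Lemma has_arcP n (M : {set arc n}) x y :
  reflect (exists2 p, p \in M & p.1 = x :> nat /\ p.2 = y :> nat) (has_arc M x y).
Proof.
apply: (iffP existsP) => [[p /andP[pM /andP[/eqP <- /eqP <-]]]|[p pM [<- <-]]];
  by exists p; rewrite ?pM ?eqxx.
Qed.

Lemma has_arcE n (M : {set arc n}) (p : arc n) : has_arc M p.1 p.2 = (p \in M).
Proof.
apply/has_arcP/idP => [[q qM [e1 e2]]|pM]; last by exists p.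
by rewrite (@arc_ext _ p q).
Qed.

Lemma has_arc_bound n (M : {set arc n}) x y : has_arc M x y -> x < n.*2 /\ y < n.*2.
Proof. by case/has_arcP => p _ [<- <-]. Qed.

Lemma has_arc_set n (P : rel nat) x y :
  has_arc [set p : arc n | P p.1 p.2] x y = [&& x < n.*2, y < n.*2 & P x y].
Proof.
apply/has_arcP/idP => [[p]|/and3P[hx hy hP]].
  by rewrite inE => hP [<- <-]; rewrite !ltn_ord.
by exists (Ordinal hx, Ordinal hy); rewrite ?inE.
Qed.

Lemma eq_arc_set n (A B : {set arc n}) : has_arc A =2 has_arc B -> A = B.
Proof. by move=> eqAB; apply/setP => p; rewrite -!has_arcE eqAB. Qed.

Record matching_spec n (M : {set arc n}) : Prop := MatchingSpec {
  arc_lt : forall x y, has_arc M x y -> x < y;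
  point_covered : forall x, x < n.*2 -> exists y, has_arc M x y || has_arc M y x;
  arc_uniq : forall x y u v, has_arc M x y -> has_arc M u v ->
    [|| x == u, x == v, y == u | y == v] -> x = u /\ y = v
}.

Lemma shared_endpoint n (p q : arc n) (z : 'I_n.*2) :
  (p.1 == z) || (p.2 == z) -> (q.1 == z) || (q.2 == z) ->
  [|| p.1 == q.1 :> nat, p.1 == q.2 :> nat, p.2 == q.1 :> nat | p.2 == q.2 :> nat].
Proof. by do 2 case/orP=> /eqP->; rewrite eqxx ?orbT. Qed.

Lemma matchingP n (M : {set arc n}) : is_matching M <-> matching_spec M.
Proof.
split=> [/andP[/forall_inP lt_arc /forallP cover1] | hM].
  have arc_at z : exists p, [set p in M | (p.1 == z) || (p.2 == z)] = [set p].
    exact/cards1P.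
  split.
  - by move=> x y /has_arcP[p pM [<- <-]]; apply: lt_arc.
  - move=> x x_lt; have [p ep] := arc_at (Ordinal x_lt).
    have := set11 p; rewrite -ep inE => /andP[pM /orP[]/eqP/(congr1 val)/= px].
      by exists p.2; rewrite -px has_arcE pM.
    by exists p.1; rewrite -px has_arcE pM orbT.
  move=> x y u v /has_arcP[p pM [<- <-]] /has_arcP[q qM [<- <-]] shared.
  suff -> : p = q by [].
  have [z [pz qz]] : exists z, ((p.1 == z) || (p.2 == z)) /\ ((q.1 == z) || (q.2 == z)).
    by case/or4P: shared => /eqP/val_inj e;
      [exists p.1 | exists p.1 | exists p.2 | exists p.2]; rewrite e !eqxx ?orbT.
  have [r er] := arc_at z.
  have: p \in [set r] by rewrite -er inE pM pz.
  have: q \in [set r] by rewrite -er inE qM qz.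
  by rewrite !inE => /eqP-> /eqP->.
apply/andP; split.
  by apply/forall_inP => p pM; apply: (arc_lt hM); rewrite has_arcE.
apply/forallP => z; apply/cards1P.
have [p pM pz] : exists2 p, p \in M & (p.1 == z) || (p.2 == z).
  have [y /orP[] /has_arcP[p pM [p1 p2]]] := point_covered hM (ltn_ord z).
    by exists p; rewrite // (val_inj p1) eqxx.
  by exists p; rewrite // (val_inj p2) eqxx orbT.
exists p; apply/setP => q; rewrite !inE.
apply/andP/eqP => [[qM qz]|->]; last by [].
rewrite -!has_arcE in pM qM.
by have [] := arc_uniq hM qM pM (shared_endpoint qz pz); apply: arc_ext.
Qed.

Lemma card_matching n (M : {set arc n}) : is_matching M -> #|M| = n.
Proof.
case/andP => /forall_inP lt_arc /forallP cover1; apply: double_inj.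
have two_ends p : p \in M -> \sum_(z : 'I_n.*2) ((p.1 == z) || (p.2 == z)) = 2.
  move=> /lt_arc p_lt; rewrite -[2]/(1 + 1) -{1}(sum_eq1 p.1) -(sum_eq1 p.2) -big_split.
  apply: eq_bigr => z _; case: eqP => [<-|] //=.
  by rewrite -val_eqE gtn_eqF.
rewrite -muln2 -sum_nat_const.
transitivity (\sum_(p in M) \sum_(z : 'I_n.*2) ((p.1 == z) || (p.2 == z))).
  by apply: eq_bigr => p /two_ends.
rewrite exchange_big -[RHS]card_ord -sum1_card /=.
by apply: eq_bigr => z _; rewrite -card_sum (eqP (cover1 z)).
Qed.

(** * Parents, children and occurrences *)

Definition has_parent n (M : {set arc n}) x y := (0 < x) && has_arc M x.-1 y.+1.
Definition has_child n (M : {set arc n}) x y := (0 < y) && has_arc M x.+1 y.-1.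
Definition has_grandparent n (M : {set arc n}) x y :=
  has_parent M x y && has_parent M x.-1 y.+1.

Lemma occ21_parentE n (M : {set arc n}) :
  occ21 M = #|[set p in M | has_parent M p.1 p.2]|.
Proof.
rewrite /occ21 -(card_in_imset (f := snd)) => [|[q r] [q' r']]; last first.
  rewrite !inE /= => /and4P[_ _ /eqP r1 /eqP q2] /and4P[_ _ /eqP r1' /eqP q2'] rr'.
  by rewrite -{}rr' in r1' q2' *; congr pair; apply: arc_ext; lia.
apply: eq_card => p; rewrite !inE.
apply/imsetP/andP => [[[q r]] | [pM /andP[p1_gt0 /has_arcP[q qM [q1 q2]]]]].
  rewrite inE /= => /and4P[qM rM /eqP r1 /eqP q2] ->.
  by rewrite rM /has_parent r1 -q2 has_arcE.
by exists (q, p); rewrite // inE /= qM pM q1 q2 prednK ?eqxx.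
Qed.

Lemma occ21_childE n (M : {set arc n}) :
  occ21 M = #|[set p in M | has_child M p.1 p.2]|.
Proof.
rewrite /occ21 -(card_in_imset (f := fst)) => [|[q r] [q' r']]; last first.
  rewrite !inE /= => /and4P[_ _ /eqP r1 /eqP q2] /and4P[_ _ /eqP r1' /eqP q2'] qq'.
  by rewrite -{}qq' in r1' q2' *; congr pair; apply: arc_ext; lia.
apply: eq_card => p; rewrite !inE.
apply/imsetP/andP => [[[q r]] | [pM /andP[p2_gt0 /has_arcP[r rM [r1 r2]]]]].
  rewrite inE /= => /and4P[qM rM /eqP r1 /eqP q2] ->.
  by rewrite qM /has_child -r1 q2 has_arcE.
by exists (p, r); rewrite // inE /= pM rM r1 r2 prednK ?eqxx.
Qed.

Lemma occ321E n (M : {set arc n}) :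
  occ321 M = #|[set p in M | has_grandparent M p.1 p.2]|.
Proof.
rewrite /occ321 -(card_in_imset (f := snd)) => [|[[q r] t] [[q' r'] t']]; last first.
  rewrite !inE /= => /and5P[_ _ _ /eqP r1 /and3P[/eqP t1 /eqP q2 /eqP r2]].
  move=> /and5P[_ _ _ /eqP r1' /and3P[/eqP t1' /eqP q2' /eqP r2']] tt'.
  by rewrite -{}tt' in t1' r2' *; congr (_, _, _); apply: arc_ext; lia.
apply: eq_card => p; rewrite !inE.
apply/imsetP/andP => [[[[q r] t]] | ].
  rewrite inE /= => /and5P[qM rM tM /eqP r1 /and3P[/eqP t1 /eqP q2 /eqP r2]] ->.
  by rewrite tM /has_grandparent /has_parent t1 /= -r2 has_arcE rM r1 /= -q2 has_arcE.
case=> pM /andP[/andP[p1_gt0 /has_arcP[r rM [r1 r2]]] /andP[p1_gt1 /has_arcP[q qM [q1 q2]]]].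
by exists (q, r, p); rewrite // inE /= qM rM pM r1 r2 q1 q2 !prednK ?eqxx.
Qed.

Lemma card_lone_arcs n (M : {set arc n}) : is_matching M -> occ321 M = 0 ->
  #|[set p in M | ~~ has_parent M p.1 p.2 && ~~ has_child M p.1 p.2]| = n - (occ21 M).*2.
Proof.
move=> Mm no321.
have not_both p : p \in M -> ~~ (has_parent M p.1 p.2 && has_child M p.1 p.2).
  (* otherwise the child of p would be the inner arc of a 321 *)
  move=> pM; apply/negP => /andP[/andP[p1_gt0 parent] /andP[p2_gt0 /has_arcP[q qM [q1 q2]]]].
  move/eqP: no321; rewrite occ321E cards_eq0 => /eqP/setP/(_ q).
  by rewrite !inE qM /has_grandparent /has_parent q1 q2 /= prednK // has_arcE pM p1_gt0 parent.
suff: #|M| = #|[set p in M | ~~ has_parent M p.1 p.2 && ~~ has_child M p.1 p.2]|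
             + occ21 M + occ21 M by rewrite card_matching //; lia.
rewrite {1}occ21_parentE occ21_childE !card_sum -sum1_card -!big_split.
by apply: eq_bigr => p /not_both; case: has_parent; case: has_child.
Qed.

Lemma occ321_le_occ21 n (M : {set arc n}) : occ321 M <= occ21 M.
Proof.
rewrite occ321E occ21_parentE; apply/subset_leq_card/subsetP => p.
by rewrite !inE => /andP[-> /andP[]].
Qed.

Lemma occ21_le n (M : {set arc n}) : is_matching M -> occ21 M <= n.
Proof.
move=> Mm; rewrite occ21_parentE; apply: leq_trans (eq_leq (card_matching Mm)).
by apply/subset_leq_card/subsetP => p; rewrite inE => /andP[].
Qed.

(** * Doubling an arc *)

(* New points are inserted right after a and right after b: the old point x becomes
   [bump2 a b x], and the arc (a, b) becomes (a, b.+2) around the new arc (a.+1, b.+1). *)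
Definition bump2 a b x := x + (a < x) + (b <= x).
Definition unbump2 a b u := u - (a.+1 < u) - (b.+1 < u).

Section Bump2.
Variables a b : nat.
Hypothesis a_lt_b : a < b.

Lemma bump2K : cancel (bump2 a b) (unbump2 a b).
Proof. by rewrite /bump2 /unbump2 => x; lia. Qed.

Lemma unbump2K u : u != a.+1 -> u != b.+1 -> bump2 a b (unbump2 a b u) = u.
Proof. by rewrite /bump2 /unbump2; lia. Qed.

Lemma bump2_neq1 x : (bump2 a b x == a.+1) = false.
Proof. by rewrite /bump2; lia. Qed.

Lemma bump2_neq2 x : (bump2 a b x == b.+1) = false.
Proof. by rewrite /bump2; lia. Qed.

Lemma bump2_gt0 x : (0 < bump2 a b x) = (0 < x).
Proof. by rewrite /bump2; lia. Qed.

Lemma bump2_pred x : x != a.+1 -> x != b -> (bump2 a b x).-1 = bump2 a b x.-1.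
Proof. by rewrite /bump2; lia. Qed.

Lemma bump2_succ x : x != a -> x.+1 != b -> (bump2 a b x).+1 = bump2 a b x.+1.
Proof. by rewrite /bump2; lia. Qed.

End Bump2.

Lemma bump2_lt a b x n : x < n.*2 -> bump2 a b x < n.+1.*2.
Proof. by rewrite /bump2; lia. Qed.

Definition double_rel (R : rel nat) a b : rel nat := fun u v =>
  ((u == a.+1) && (v == b.+1)) ||
  [&& u != a.+1, u != b.+1, v != a.+1, v != b.+1 & R (unbump2 a b u) (unbump2 a b v)].

Definition double_arc n (M : {set arc n}) a b : {set arc n.+1} :=
  [set p : arc n.+1 | double_rel (has_arc M) a b p.1 p.2].

Definition undouble_arc n (M : {set arc n.+1}) a b : {set arc n} :=
  [set p : arc n | has_arc M (bump2 a b p.1) (bump2 a b p.2)].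

Lemma has_arc_double n (M : {set arc n}) a b u v : a < b -> b <= n.*2 ->
  has_arc (double_arc M a b) u v = double_rel (has_arc M) a b u v.
Proof.
move=> a_lt_b b_le; rewrite has_arc_set; apply/and3P/idP => [[//]|uv]; split=> //.
- by case/orP: uv => [/andP[/eqP-> _]|/and5P[_ _ _ _ /has_arc_bound]]; rewrite /unbump2; lia.
- by case/orP: uv => [/andP[_ /eqP->]|/and5P[_ _ _ _ /has_arc_bound]]; rewrite /unbump2; lia.
Qed.

Lemma has_arc_undouble n (M : {set arc n.+1}) a b x y :
  has_arc (undouble_arc M a b) x y =
  [&& x < n.*2, y < n.*2 & has_arc M (bump2 a b x) (bump2 a b y)].
Proof. exact: (@has_arc_set n (fun x y => has_arc M (bump2 a b x) (bump2 a b y))). Qed.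

Definition bump2_arc n a b (p : arc n) : arc n.+1 :=
  (inord (bump2 a b p.1), inord (bump2 a b p.2)).

Lemma bump2_arc1 n a b (p : arc n) : (bump2_arc a b p).1 = bump2 a b p.1 :> nat.
Proof. by rewrite /= inordK // bump2_lt. Qed.

Lemma bump2_arc2 n a b (p : arc n) : (bump2_arc a b p).2 = bump2 a b p.2 :> nat.
Proof. by rewrite /= inordK // bump2_lt. Qed.

Lemma bump2_arc_inj n a b : a < b -> injective (@bump2_arc n a b).
Proof.
move=> a_lt_b p q e; have := congr1 (fun r => (val r.1, val r.2)) e.
rewrite /= !inordK ?bump2_lt // => -[/(can_inj (bump2K a_lt_b)) e1 /(can_inj (bump2K a_lt_b)) e2].
exact: arc_ext.
Qed.

Section Doubling.
Variables (n : nat) (M : {set arc n}) (a b : nat).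
Hypotheses (Mm : matching_spec M) (Mab : has_arc M a b).

Let a_lt_b : a < b := arc_lt Mm Mab.
Let b_le : b <= n.*2. Proof. by have [_ /ltnW] := has_arc_bound Mab. Qed.

Local Notation D := (double_arc M a b).

Lemma has_arc_double_bump x y :
  has_arc D (bump2 a b x) (bump2 a b y) = has_arc M x y.
Proof.
by rewrite has_arc_double // /double_rel !bump2_neq1 // !bump2_neq2 // !bump2K.
Qed.

Lemma has_arc_double_new : has_arc D a.+1 b.+1.
Proof. by rewrite has_arc_double // /double_rel !eqxx. Qed.

Lemma double_arc_spec : matching_spec D.
Proof.
split.
- move=> u v; rewrite has_arc_double //.
  by case/orP => [/andP[/eqP-> /eqP->]|/and5P[_ _ _ _ /(arc_lt Mm)]]; rewrite /unbump2; lia.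
- move=> u u_lt.
  case: (eqVneq u a.+1) => [->|u_a]; first by exists b.+1; rewrite has_arc_double_new.
  case: (eqVneq u b.+1) => [->|u_b]; first by exists a.+1; rewrite has_arc_double_new orbT.
  have [|w Mw] := point_covered Mm (x := unbump2 a b u); first by rewrite /unbump2; lia.
  by exists (bump2 a b w); rewrite -(unbump2K a_lt_b u_a u_b) !has_arc_double_bump.
move=> x y u v; rewrite !has_arc_double // /double_rel.
case/orP => [/andP[/eqP-> /eqP->]|/and5P[x_a x_b y_a y_b Mxy]];
  case/orP => [/andP[/eqP-> /eqP->]|/and5P[u_a u_b v_a v_b Muv]] //; try lia.
move=> shared; have bumpK := unbump2K a_lt_b.
have [e1 e2] : unbump2 a b x = unbump2 a b u /\ unbump2 a b y = unbump2 a b v.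
  by apply: (arc_uniq Mm Mxy Muv); case/or4P: shared => /eqP->; rewrite eqxx ?orbT.
by rewrite -(bumpK x) // e1 bumpK // -(bumpK y) // e2 bumpK.
Qed.

Lemma double_arcK : undouble_arc D a b = M.
Proof.
apply: eq_arc_set => x y; rewrite has_arc_undouble has_arc_double_bump.
by apply/and3P/idP => [[] //|Mxy]; have [-> ->] := has_arc_bound Mxy.
Qed.

Lemma no_arc_from_b x y : has_arc M x y -> x != b.
Proof.
move=> Mxy; apply/eqP => xb; rewrite xb in Mxy.
have [ba _] : b = a /\ y = b by apply: (arc_uniq Mm Mxy Mab); rewrite eqxx /= orbT.
by move: a_lt_b; rewrite ba ltnn.
Qed.

Lemma no_arc_to_a x y : has_arc M x y -> y != a.
Proof.
move=> Mxy; apply/eqP => ya; rewrite ya in Mxy.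
have [xa _] : x = a /\ a = b by apply: (arc_uniq Mm Mxy Mab); rewrite eqxx !orbT.
by have := arc_lt Mm Mxy; rewrite xa ltnn.
Qed.

Let bump2_a : bump2 a b a = a. Proof. by rewrite /bump2; lia. Qed.
Let bump2_b : bump2 a b b = b.+2. Proof. by rewrite /bump2; lia. Qed.

Lemma has_parent_new : has_parent D a.+1 b.+1.
Proof. by have := has_arc_double_bump a b; rewrite bump2_a bump2_b Mab /has_parent => ->. Qed.

Lemma has_parent_double x y : has_arc M x y ->
  has_parent D (bump2 a b x) (bump2 a b y) = has_parent M x y.
Proof.
move=> Mxy; have x_lt_y := arc_lt Mm Mxy.
have x_b := no_arc_from_b Mxy; have y_a := no_arc_to_a Mxy.
case: (eqVneq x a.+1) => [xa|x_a].
  (* the only possible parents are (a.+1, b.+1) in D and (a, b) in M *)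
  have -> : bump2 a b x = a.+2 by rewrite /bump2; lia.
  rewrite /has_parent has_arc_double // /double_rel xa eqxx /= orbF.
  apply/eqP/idP => [|May]; first by rewrite /bump2 => bump_y; rewrite (_ : y.+1 = b) //; lia.
  have [_ yb] : a = a /\ y.+1 = b by apply: (arc_uniq Mm May Mab); rewrite eqxx.
  by rewrite /bump2; lia.
case: (eqVneq y.+1 b) => [yb|y_b]; last first.
  by rewrite /has_parent bump2_gt0 // bump2_pred // bump2_succ // has_arc_double_bump.
(* a parent would end at b in M, resp. b.+1 in D, so it would be (a, b), resp.
   (a.+1, b.+1), forcing x = a.+1 *)
transitivity false.
  apply/negbTE; rewrite /has_parent has_arc_double // /double_rel.
  by apply/negP => /andP[_ /orP[/andP[/eqP]|/and5P[_ _ _ /eqP[]]]]; rewrite /bump2; lia.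
apply/esym/negbTE/andP => [[x_gt0 Mxb]].
have [xa _] : x.-1 = a /\ y.+1 = b by apply: (arc_uniq Mm Mxb Mab); rewrite yb eqxx !orbT.
lia.
Qed.

Lemma has_grandparent_double x y : has_arc M x y ->
  has_grandparent D (bump2 a b x) (bump2 a b y) =
  has_grandparent M x y || (x == a.+1) && (y.+1 == b).
Proof.
move=> Mxy; have y_a := no_arc_to_a Mxy.
rewrite /has_grandparent has_parent_double //.
case: (boolP ((x == a.+1) && (y.+1 == b))) => [/andP[/eqP xa /eqP yb]|not_child].
  have -> : (bump2 a b x).-1 = a.+1 by rewrite /bump2; lia.
  have -> : (bump2 a b y).+1 = b.+1 by rewrite /bump2; lia.
  by rewrite has_parent_new orbT /has_parent xa yb Mab.
rewrite orbF; case Mxy_parent: (has_parent M x y) => //=.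
move: Mxy_parent => /andP[x_gt0 Mparent].
have shared_parent := arc_uniq Mm Mparent Mab.
have x_a : x != a.+1 by lia.
have y_b : y.+1 != b by lia.
by rewrite bump2_pred ?(no_arc_from_b Mxy) // bump2_succ // has_parent_double.
Qed.

Lemma has_grandparent_new : has_grandparent D a.+1 b.+1 = has_parent M a b.
Proof. by rewrite /has_grandparent has_parent_new /= -has_parent_double // bump2_a bump2_b. Qed.

Lemma card_double (P Q : rel nat) :
  (forall x y, has_arc M x y -> P (bump2 a b x) (bump2 a b y) = Q x y) ->
  #|[set p in D | P p.1 p.2]| = #|[set p in M | Q p.1 p.2]| + P a.+1 b.+1.
Proof.
move=> PQ; have /has_arcP[r rD [r1 r2]] := has_arc_double_new.
rewrite (cardsD1 r) in_set rD r1 r2 addnC; congr (_ + _).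
rewrite -[in RHS](card_in_imset (f := bump2_arc a b)); last exact: in2W (bump2_arc_inj a_lt_b).
apply: eq_card => p; rewrite in_setD1 in_set; apply/andP/imsetP => [[p_r /andP[pD Pp]]|[q]].
  move: pD; rewrite -has_arcE has_arc_double // /double_rel.
  case/orP => [/andP[/eqP p1 /eqP p2]|/and5P[p1_a p1_b p2_a p2_b /has_arcP[q qM [q1 q2]]]].
    by case/eqP: p_r; apply: arc_ext; rewrite ?p1 ?p2 ?r1 ?r2.
  have p_bumped : p = bump2_arc a b q.
    by apply: arc_ext; rewrite ?bump2_arc1 ?bump2_arc2 ?q1 ?q2 unbump2K.
  exists q => //; rewrite inE qM -PQ ?has_arcE //.
  by move: Pp; rewrite p_bumped bump2_arc1 bump2_arc2.
rewrite inE => /andP[qM Qq] ->; split.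
  apply/eqP => /(congr1 (fun p => val p.1)) /=.
  by rewrite bump2_arc1 r1 => /eqP; rewrite bump2_neq1.
by rewrite -has_arcE bump2_arc1 bump2_arc2 has_arc_double_bump has_arcE qM PQ ?has_arcE.
Qed.

Lemma occ21_double : occ21 D = (occ21 M).+1.
Proof.
by rewrite !occ21_parentE (card_double (Q := has_parent M)) ?has_parent_new ?addn1 //;
  apply: has_parent_double.
Qed.

Lemma card_children :
  #|[set p in M | (p.1 == a.+1 :> nat) && (p.2.+1 == b)]| = has_child M a b.
Proof.
case: (boolP (has_child M a b)) => [/andP[b_gt0 /has_arcP[q qM [q1 q2]]]|no_child].
  apply/eqP/cards1P; exists q; apply/setP => p; rewrite !inE.
  apply/andP/eqP => [[pM /andP[/eqP p1 /eqP p2]]|->]; last by rewrite qM q1 q2 prednK ?eqxx.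
  by apply: arc_ext; rewrite ?p1 ?q1 // q2 -p2.
apply/eqP; rewrite cards_eq0; apply/eqP/setP => p; rewrite !inE.
apply: contraNF no_child => /andP[pM /andP[/eqP p1 /eqP p2]].
by rewrite /has_child -p1 -p2 /= has_arcE pM.
Qed.

Lemma occ321_double :
  occ321 D = occ321 M + has_parent M a b + (~~ has_parent M a b && has_child M a b).
Proof.
pose Q x y := has_grandparent M x y || (x == a.+1) && (y.+1 == b).
rewrite !occ321E (card_double (Q := Q)); last exact: has_grandparent_double.
rewrite has_grandparent_new addnAC /Q; congr (_ + _).
have child_grandparent p : p \in M -> (p.1 == a.+1 :> nat) && (p.2.+1 == b) ->
    has_grandparent M p.1 p.2 = has_parent M a b.
  by move=> pM /andP[/eqP p1 /eqP p2]; rewrite /has_grandparent p1 {1}/has_parent /= p2 Mab.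
case: (boolP (has_parent M a b)) => hp /=.
  rewrite addn0; apply: eq_card => p; rewrite !inE; case pM: (p \in M) => //=.
  by case C: (_ && _); rewrite ?orbF // orbT child_grandparent.
rewrite -card_children !card_sum -big_split; apply: eq_bigr => p pM /=.
by case C: (_ && _); rewrite ?orbF ?addn0 // orbT child_grandparent // (negbTE hp).
Qed.

End Doubling.

Section Undoubling.
Variables (n : nat) (M : {set arc n.+1}) (a b : nat).
Hypotheses (Mm : matching_spec M) (Mab : has_arc M a.+1 b.+1).

Let a_lt_b : a < b. Proof. by have := arc_lt Mm Mab. Qed.
Let b_le : b <= n.*2. Proof. by have [_] := has_arc_bound Mab; lia. Qed.

Lemma no_arc_at_new x y : has_arc M x y -> (x, y) != (a.+1, b.+1) ->
  [&& x != a.+1, x != b.+1, y != a.+1 & y != b.+1].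
Proof.
move=> Mxy; rewrite xpair_eqE; have := arc_uniq Mm Mxy Mab; have := arc_lt Mm Mxy.
by lia.
Qed.

Lemma undouble_arc_spec : matching_spec (undouble_arc M a b).
Proof.
split.
- by move=> x y; rewrite has_arc_undouble => /and3P[_ _ /(arc_lt Mm)]; rewrite /bump2; lia.
- move=> x x_lt; have bump_x_lt := bump2_lt a b x_lt.
  have [w Mw] := point_covered Mm bump_x_lt.
  have [w_a w_b] : w != a.+1 /\ w != b.+1.
    by case/orP: Mw => /no_arc_at_new; rewrite xpair_eqE !bump2_neq1 ?bump2_neq2 //; lia.
  have w_lt : w < n.+1.*2 by case/orP: Mw => /has_arc_bound[].
  have unbump_w_lt : unbump2 a b w < n.*2 by rewrite /unbump2; lia.
  by exists (unbump2 a b w); rewrite !has_arc_undouble unbump2K // x_lt unbump_w_lt.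
move=> x y u v; rewrite !has_arc_undouble => /and3P[_ _ Mxy] /and3P[_ _ Muv] shared.
have bumpK := can_inj (bump2K a_lt_b).
have [e1 e2] : bump2 a b x = bump2 a b u /\ bump2 a b y = bump2 a b v.
  by apply: (arc_uniq Mm Mxy Muv); case/or4P: shared => /eqP->; rewrite eqxx ?orbT.
by split; apply: bumpK.
Qed.

Lemma undouble_arcK : double_arc (undouble_arc M a b) a b = M.
Proof.
apply: eq_arc_set => u v; rewrite has_arc_double // /double_rel.
apply/idP/idP => [|Muv].
  case/orP => [/andP[/eqP-> /eqP->] //|/and5P[u_a u_b v_a v_b]].
  by rewrite has_arc_undouble !unbump2K // => /and3P[].
case: (eqVneq (u, v) (a.+1, b.+1)) => [[-> ->]|uv_new]; first by rewrite !eqxx.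
have /and4P[u_a u_b v_a v_b] := no_arc_at_new Muv uv_new.
rewrite u_a u_b v_a v_b has_arc_undouble !unbump2K // Muv !andbT orbC /=.
by have [u_lt v_lt] := has_arc_bound Muv; rewrite /unbump2; lia.
Qed.

End Undoubling.

(** * Counting by doubling *)

Definition pointed n (X : {set arc n} * arc n) := is_matching X.1 && (X.2 \in X.1).

Definition inner_arc n (p : arc n) : arc n.+1 := (inord p.1.+1, inord p.2.+1).

Lemma inner_arc1 n (p : arc n) : (inner_arc p).1 = p.1.+1 :> nat.
Proof. by rewrite /= inordK // !ltnS ltnW. Qed.

Lemma inner_arc2 n (p : arc n) : (inner_arc p).2 = p.2.+1 :> nat.
Proof. by rewrite /= inordK // !ltnS ltnW. Qed.

Lemma inner_arc_inj n : injective (@inner_arc n).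
Proof.
move=> p q pq; apply: arc_ext; apply: succn_inj.
  by rewrite -inner_arc1 pq inner_arc1.
by rewrite -inner_arc2 pq inner_arc2.
Qed.

Definition double_pair n (X : {set arc n} * arc n) : {set arc n.+1} * arc n.+1 :=
  (double_arc X.1 X.2.1 X.2.2, inner_arc X.2).

Lemma double_pair_inj n : {in @pointed n &, injective (@double_pair n)}.
Proof.
move=> [M e] [M' e'] /andP[/= /matchingP Mm eM] /andP[/= /matchingP Mm' eM'] eqD.
have e_eq : e = e' by apply: inner_arc_inj; exact: (congr1 snd eqD).
subst e'; rewrite -!has_arcE in eM eM'.
have /= DD' := congr1 fst eqD.
by rewrite -(double_arcK Mm eM) -(double_arcK Mm' eM') DD'.
Qed.

Lemma double_pair_onto n (M : {set arc n.+1}) (e : arc n.+1) :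
  is_matching M -> e \in M -> has_parent M e.1 e.2 ->
  exists2 X, pointed X & double_pair X = (M, e).
Proof.
move=> /matchingP Mm; rewrite -has_arcE => Me /andP[e1_gt0 Mparent].
have e_lt := arc_lt Mm Me; have [_ e2_lt] := has_arc_bound Mparent.
have e'1 : e.1.-1 < n.*2 by lia.
have e'2 : e.2.-1 < n.*2 by lia.
have Me' : has_arc M e.1.-1.+1 e.2.-1.+1 by rewrite !prednK //; lia.
exists (undouble_arc M e.1.-1 e.2.-1, (Ordinal e'1, Ordinal e'2)).
  apply/andP; split; first exact/matchingP/undouble_arc_spec.
  rewrite -has_arcE has_arc_undouble e'1 e'2 /=.
  have -> : bump2 e.1.-1 e.2.-1 e.1.-1 = e.1.-1 by rewrite /bump2; lia.
  by have -> : bump2 e.1.-1 e.2.-1 e.2.-1 = e.2.+1 by rewrite /bump2; lia.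
rewrite /double_pair /= undouble_arcK //; congr pair.
by apply: arc_ext; rewrite ?inner_arc1 ?inner_arc2 /= prednK //; lia.
Qed.

Lemma double_pair_pointed n (X : {set arc n} * arc n) : pointed X -> pointed (double_pair X).
Proof.
case: X => M e /andP[/= /matchingP Mm]; rewrite -has_arcE => Me.
apply/andP; split; first exact/matchingP/double_arc_spec.
by rewrite -has_arcE inner_arc1 inner_arc2 has_arc_double_new.
Qed.

Lemma double_pair_stats n (X : {set arc n} * arc n) : pointed X ->
  [/\ occ21 (double_pair X).1 = (occ21 X.1).+1,
      occ321 (double_pair X).1 = occ321 X.1 + has_parent X.1 X.2.1 X.2.2
                                 + (~~ has_parent X.1 X.2.1 X.2.2 && has_child X.1 X.2.1 X.2.2),
      has_parent (double_pair X).1 (double_pair X).2.1 (double_pair X).2.2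
    & has_grandparent (double_pair X).1 (double_pair X).2.1 (double_pair X).2.2
      = has_parent X.1 X.2.1 X.2.2].
Proof.
case: X => M e /andP[/= /matchingP Mm]; rewrite -has_arcE => Me.
rewrite inner_arc1 inner_arc2 has_parent_new // has_grandparent_new //.
by rewrite occ21_double // occ321_double.
Qed.

Lemma card_double_pairs n
    (A : {set {set arc n.+1} * arc n.+1}) (B : {set {set arc n} * arc n}) :
  (forall X, X \in B -> pointed X) ->
  (forall Y, Y \in A -> [&& is_matching Y.1, Y.2 \in Y.1 & has_parent Y.1 Y.2.1 Y.2.2]) ->
  (forall X, pointed X -> (double_pair X \in A) = (X \in B)) ->
  #|A| = #|B|.
Proof.
move=> B_pointed A_parent AB.
rewrite -[in RHS](card_in_imset (f := @double_pair n));
  last exact: sub_in2 (@double_pair_inj n).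
apply: eq_card => Y; apply/idP/imsetP => [YA|[X XB ->]]; last by rewrite AB //; apply: B_pointed.
have /and3P[Ym Ye Yparent] := A_parent Y YA.
have [X Xp XY] := double_pair_onto Ym Ye Yparent.
by exists X; rewrite -?AB // XY -surjective_pairing.
Qed.

Definition d_set n s k : {set {set arc n}} :=
  [set M | [&& is_matching M, occ21 M == s + k & occ321 M == k]].

Definition d_nsk n s k := #|d_set n s k|.

Lemma d_nsk_rec321 n s k : k.+1 * d_nsk n.+1 s k.+1 = (s + k) * d_nsk n s k.
Proof.
pose grandchildren (M : {set arc n.+1}) := [set p in M | has_grandparent M p.1 p.2].
pose children (M : {set arc n}) := [set p in M | has_parent M p.1 p.2].
rewrite -(@card_pairs_const _ _ _ grandchildren); last first.
  by move=> M; rewrite inE => /and3P[_ _ /eqP <-]; rewrite occ321E.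
rewrite -(@card_pairs_const _ _ _ children); last first.
  by move=> M; rewrite inE => /and3P[_ /eqP <- _]; rewrite occ21_parentE.
apply: card_double_pairs => [[M e]|[M e]|X Xp].
- by rewrite !inE /pointed => /and3P[/and3P[-> _ _] -> _].
- by rewrite !inE => /and3P[/and3P[-> _ _] -> /andP[]].
have := double_pair_stats Xp; have := double_pair_pointed Xp; case/andP: Xp => Xm Xe.
move: (double_pair X) => Y /andP[Ym Ye] [Y21 Y321 _ Ygp].
rewrite !inE Ym Ye Xm Xe Y21 Y321 Ygp addnS eqSS /=.
by case: has_parent; rewrite ?addn0 ?addn1 ?eqSS ?andbF.
Qed.

Lemma d_nsk_rec21 n s : s.+1 * d_nsk n.+1 s.+1 0 = (n - s.*2) * d_nsk n s 0.
Proof.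
pose children (M : {set arc n.+1}) := [set p in M | has_parent M p.1 p.2].
pose lone (M : {set arc n}) := [set p in M | ~~ has_parent M p.1 p.2 && ~~ has_child M p.1 p.2].
rewrite -(@card_pairs_const _ _ _ children); last first.
  by move=> M; rewrite inE addn0 => /and3P[_ /eqP <- _]; rewrite occ21_parentE.
rewrite -(@card_pairs_const _ _ _ lone); last first.
  by move=> M; rewrite inE addn0 => /and3P[Mm /eqP <- /eqP no321]; rewrite card_lone_arcs.
apply: card_double_pairs => [[M e]|[M e]|X Xp].
- by rewrite !inE /pointed => /and3P[/and3P[-> _ _] -> _].
- by rewrite !inE => /and3P[/and3P[-> _ _] -> ->].
have := double_pair_stats Xp; have := double_pair_pointed Xp; case/andP: Xp => Xm Xe.
move: (double_pair X) => Y /andP[Ym Ye] [Y21 Y321 Yp _].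
rewrite !inE Ym Ye Xm Xe Y21 Y321 Yp !addn0 eqSS /=.
by case: has_parent; case: has_child; rewrite ?addn0 ?addn1 ?andbT ?andbF.
Qed.

Lemma d_nsk00 n : d_nsk n 0 0 = a_n0 n.
Proof.
apply: eq_card => M; rewrite !inE; case: (boolP (is_matching M)) => //= _.
by case: eqP => //= occ21_0; have := occ321_le_occ21 M; rewrite occ21_0 leqn0.
Qed.

Lemma d_nsk0 s k : 0 < s + k -> d_nsk 0 s k = 0.
Proof.
move=> sk_gt0; apply/eqP; rewrite cards_eq0; apply/eqP/setP => M; rewrite !inE.
by apply/negbTE/and3P => -[/occ21_le + /eqP occ21_sk _]; rewrite occ21_sk; lia.
Qed.

Lemma d_nskE k n s :
  d_nsk n s k = 'C(k + s - 1, k) * 'C(n - k - s, s) * a_n0 (n - k - s).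
Proof.
elim: k n s => [|k IHk] n s.
  rewrite bin0 mul1n subn0; elim: s n => [|s IHs] n; first by rewrite d_nsk00 subn0 bin0 mul1n.
  case: n => [|n]; first by rewrite d_nsk0 // bin0n.
  apply/eqP; rewrite -(eqn_pmul2l (ltn0Sn s)) d_nsk_rec21 IHs subSS; apply/eqP.
  by rewrite [RHS]mulnA mul_bin_left -subnDA addnn mulnA.
case: n => [|n].
  rewrite d_nsk0 ?addnS //; case: s => [|s]; last by rewrite bin0n muln0 mul0n.
  by rewrite addn0 subn1 bin_small ?mul0n.
apply/eqP; rewrite -(eqn_pmul2l (ltn0Sn k)) d_nsk_rec321 IHk; apply/eqP.
by rewrite addSn !subSS subn0 !mulnA -mul_bin_diag [s + k]addnC subn1.
Qed.

Lemma c_nkE n k : c_nk n k = \sum_(s < n.+1) d_nsk n s k.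
Proof.
rewrite /c_nk (@card_partition_nat _ _ (fun M => occ21 M - k) n.+1) => [|M]; last first.
  by rewrite inE => /andP[/occ21_le]; lia.
apply: eq_bigr => s _; apply: eq_card => M; rewrite !inE.
case: (boolP (is_matching M)) => //= _; case: eqP => [occ321_k|]; last by rewrite !andbF.
by have := occ321_le_occ21 M; rewrite occ321_k !andbT => k_le; apply/eqP/eqP; lia.
Qed.

Theorem theorem3 (n : nat) : (0 < n)%N ->
  c_nk n 0 = (\sum_(0 <= s < (n./2).+1) 'C(n - s, s) * a_n0 (n - s))%N /\
  (forall k : nat, (0 < k)%N ->
     c_nk n k = (\sum_(1 <= s < ((n - k)./2).+1)
                   'C(k + s - 1, k) * 'C(n - k - s, s) * a_n0 (n - k - s))%N).
Proof.
move=> _; split=> [|k k_gt0]; rewrite c_nkE -(big_mkord xpredT (fun s => d_nsk n s _)).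
  rewrite (@sum_nat_trunc _ _ (n./2).+1) => [||s /andP[s_large _]].
  - by apply: eq_big_nat => s _; rewrite d_nskE bin0 mul1n subn0.
  - by lia.
  - by rewrite d_nskE (@bin_small (n - 0 - s)) ?muln0 //; lia.
rewrite big_ltn // d_nskE addn0 (@bin_small (k - 1)) ?add0n; last by lia.
rewrite (@sum_nat_trunc _ _ ((n - k)./2).+1) => [||s /andP[s_large _]].
- by apply: eq_big_nat => s _; rewrite d_nskE.
- by lia.
- by rewrite d_nskE (@bin_small (n - k - s)) ?muln0 //; lia.
Qed.
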